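(* Suppose $K\in\mathbb{K}$ and let $K'=K-2\eta\,(R+B^T\mathcal{E}(P^K)B)^{-1}L^K$, i.e. $K_i'=K_i-2\eta(R_i+B_i^T\mathcal{E}_i(P^K)B_i)^{-1}L_i^K$ for each $i$. If $0<\eta\le\frac12$, then $K'\in\mathbb{K}$.
   Context: Let $N_s\ge 1$, $\Omega=\{1,\dots,N_s\}$; tuples $V=(V_1,\dots,V_{N_s})$ of matrices are combined componentwise. Markovian jump linear system: $x_{t+1}=A_{\omega(t)}x_t+B_{\omega(t)}u_t$, $A_i\in\mathbb{R}^{d\times d}$, $B_i\in\mathbb{R}^{d\times k}$; $\{\omega(t)\}$ is a time-homogeneous Markov chain on $\Omega$ with transition probabilities $p_{ij}$ and initial distribution $\pi$ with $\pi_i>0$; $x_0$ is random, independent of the chain, with $\mathbb{E}[x_0x_0^T]\succ0$. The system is mean-square stabilizable. $Q=(Q_i)\succ0$, $R=(R_i)\succ0$. For $K=(K_i)$, $K_i\in\mathbb{R}^{k\times d}$, $u_t=-K_{\omega(t)}x_t$ and $C(K)=\mathbb{E}[\sum_{t\ge0}x_t^TQ_{\omega(t)}x_t+u_t^TR_{\omega(t)}u_t]$. $\mathbb{K}$ is the set of $K$ making the closed loop $x_{t+1}=(A_{\omega(t)}-B_{\omega(t)}K_{\omega(t)})x_t$ mean-square stable ($\mathbb{E}[x_tx_t^T]\to0$ for all initial conditions). $\mathcal{E}_i(V)=\sum_jp_{ij}V_j$. For $K\in\mathbb{K}$, $P^K$ is the unique solution of $P_i^K=Q_i+K_i^TR_iK_i+(A_i-B_iK_i)^T\mathcal{E}_i(P^K)(A_i-B_iK_i)$,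 and $L_i^K=(R_i+B_i^T\mathcal{E}_i(P^K)B_i)K_i-B_i^T\mathcal{E}_i(P^K)A_i$. *)

From HB Require Import structures.
From mathcomp Require Import all_boot all_order all_algebra.
From mathcomp Require Import all_classical all_reals all_analysis.
Set Implicit Arguments. Unset Strict Implicit. Unset Printing Implicit Defensive.
Import Order.TTheory GRing.Theory Num.Theory.
Import numFieldNormedType.Exports.
Local Open Scope classical_set_scope.
Local Open Scope ring_scope.

Section MJLS.
Variable R : realType.
Variables (N d k : nat).

(* transition matrix p : p i j = P(omega(t+1)=j | omega(t)=i) *)
Definition stochastic (p : 'M[R]_N) : Prop :=
  (forall i j, 0 <= p i j) /\ (forall i, \sum_j p i j = 1).

Definition prob_vector (pi : 'I_N -> R) : Prop :=
  (forall i, 0 <= pi i) /\ \sum_i pi i = 1.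

Definition posdef n (M : 'M[R]_n) : Prop :=
  M^T = M /\ forall x : 'cV[R]_n, x != 0 -> 0 < (x^T *m M *m x) 0 0.

Definition Eop (p : 'M[R]_N) (V : 'I_N -> 'M[R]_d) (i : 'I_N) : 'M[R]_d :=
  \sum_j p i j *: V j.

(* probability of the first states omega(0),...,omega(t-1) being the seq s *)
Fixpoint chainprob (p : 'M[R]_N) (i : 'I_N) (s : seq 'I_N) : R :=
  match s with [::] => 1 | j :: s' => p i j * chainprob p j s' end.
Definition pathprob (pi : 'I_N -> R) (p : 'M[R]_N) (s : seq 'I_N) : R :=
  match s with [::] => 1 | i :: s' => pi i * chainprob p i s' end.

(* state after following modes s from x : x_{t} = M_{w(t-1)} ... M_{w(0)} x *)
Fixpoint traj (M : 'I_N -> 'M[R]_d) (s : seq 'I_N) (x : 'cV[R]_d) : 'cV[R]_d :=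
  match s with [::] => x | i :: s' => traj M s' (M i *m x) end.

(* E[x_t x_t^T] for x_{t+1} = M_{omega(t)} x_t, omega a Markov chain with
   initial distribution pi and transition matrix p, x_0 = x0 *)
Definition second_moment (pi : 'I_N -> R) (p : 'M[R]_N) (M : 'I_N -> 'M[R]_d)
  (x0 : 'cV[R]_d) (t : nat) : 'M[R]_d :=
  \sum_(w : t.-tuple 'I_N) pathprob pi p w *: (traj M w x0 *m (traj M w x0)^T).

Definition closed_loop (A : 'I_N -> 'M[R]_d) (B : 'I_N -> 'M[R]_(d, k))
  (K : 'I_N -> 'M[R]_(k, d)) (i : 'I_N) : 'M[R]_d := A i - B i *m K i.

(* K in the set 𝕂: closed loop mean-square stable, i.e. E[x_t x_t^T] -> 0
   for all initial conditions (initial state x0, initial mode distribution) *)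
Definition ms_stabilizing (p : 'M[R]_N) (A : 'I_N -> 'M[R]_d)
  (B : 'I_N -> 'M[R]_(d, k)) (K : 'I_N -> 'M[R]_(k, d)) : Prop :=
  forall (pi : 'I_N -> R) (x0 : 'cV[R]_d), prob_vector pi ->
    forall a b : 'I_d,
      (fun t : nat => second_moment pi p (closed_loop A B K) x0 t a b) @ \oo --> (0 : R).

Definition is_PK (p : 'M[R]_N) (A : 'I_N -> 'M[R]_d) (B : 'I_N -> 'M[R]_(d, k))
  (Q : 'I_N -> 'M[R]_d) (Rc : 'I_N -> 'M[R]_k) (K : 'I_N -> 'M[R]_(k, d))
  (P : 'I_N -> 'M[R]_d) : Prop :=
  forall i, P i = Q i + (K i)^T *m Rc i *m K i
                  + (closed_loop A B K i)^T *m Eop p P i *m closed_loop A B K i.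

Definition LK (p : 'M[R]_N) (A : 'I_N -> 'M[R]_d) (B : 'I_N -> 'M[R]_(d, k))
  (Rc : 'I_N -> 'M[R]_k) (K : 'I_N -> 'M[R]_(k, d)) (P : 'I_N -> 'M[R]_d)
  (i : 'I_N) : 'M[R]_(k, d) :=
  (Rc i + (B i)^T *m Eop p P i *m B i) *m K i - (B i)^T *m Eop p P i *m A i.

Definition Kupdate (eta : R) (p : 'M[R]_N) (A : 'I_N -> 'M[R]_d)
  (B : 'I_N -> 'M[R]_(d, k)) (Rc : 'I_N -> 'M[R]_k) (K : 'I_N -> 'M[R]_(k, d))
  (P : 'I_N -> 'M[R]_d) (i : 'I_N) : 'M[R]_(k, d) :=
  K i - (2 * eta) *: (invmx (Rc i + (B i)^T *m Eop p P i *m B i) *m LK p A B Rc K P i).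

End MJLS.

(* Mean-square stability of x_{t+1} = M_{omega(t)} x_t is governed by the adjoint
   Lyapunov operator (L_M V)_i = M_i^T E_i(V) M_i: the second moments of the chain
   and the quadratic forms of the iterates L_M^t V bound each other.  Hence
   L_M^t V -> 0 for every V when M is stable, and conversely M is stable as soon as
   some V >= 0 satisfies Q + L_M(V) <= V with Q > 0, since the partial sums of the
   L_M^t Q are then bounded by V.
   For the stabilizing gain K, P = P^K solves P = Q + K^T R K + L_M(P); uniqueness of
   that solution makes P symmetric, and iterating it gives P >= Q.  In mode i and
   state x, the cost u |-> u^T R_i u + (A_i x - B_i u)^T E_i(P) (A_i x - B_i u) is a
   convex quadratic with curvature G = R_i + B_i^T E_i(P) B_i, and G^-1 L_i^K x is
   its Newton step at u = K_i x.  Moving by c = 2 eta in [0, 2] times that step lowers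
   the cost by c (2 - c) |G^-1 L_i^K x|_G^2 >= 0, so Q + L_M'(P) <= P for the updated
   closed loop M', and P certifies its stability. *)

From mathcomp Require Import all_boot all_order all_algebra.
From mathcomp Require Import all_classical all_reals all_analysis.
From mathcomp Require Import ring lra.
Import Order.TTheory GRing.Theory Num.Theory.
Import numFieldNormedType.Exports.
Local Open Scope classical_set_scope.
Local Open Scope ring_scope.
Set Implicit Arguments. Unset Strict Implicit. Unset Printing Implicit Defensive.

Section BilinearForm.
Variable R : comPzRingType.

Definition bform n (x : 'cV[R]_n) (X : 'M[R]_n) (z : 'cV[R]_n) : R :=
  (x^T *m X *m z) 0 0.

Variable n : nat.
Implicit Types (X Y : 'M[R]_n) (x y z : 'cV[R]_n).

Lemma bformDl X x y z : bform (x + y) X z = bform x X z + bform y X z.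
Proof. by rewrite /bform linearD !mulmxDl mxE. Qed.

Lemma bformDr X x y z : bform z X (x + y) = bform z X x + bform z X y.
Proof. by rewrite /bform mulmxDr mxE. Qed.

Lemma bformZl X a x z : bform (a *: x) X z = a * bform x X z.
Proof. by rewrite /bform linearZ /= -!scalemxAl mxE. Qed.

Lemma bformZr X a x z : bform z X (a *: x) = a * bform z X x.
Proof. by rewrite /bform -scalemxAr mxE. Qed.

Lemma bformNl X x z : bform (- x) X z = - bform x X z.
Proof. by rewrite -scaleN1r bformZl mulN1r. Qed.

Lemma bformNr X x z : bform z X (- x) = - bform z X x.
Proof. by rewrite -scaleN1r bformZr mulN1r. Qed.

Lemma bform0l X z : bform 0 X z = 0.
Proof. by rewrite /bform trmx0 !mul0mx mxE. Qed.

Lemma bform0r X z : bform z X 0 = 0.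
Proof. by rewrite /bform mulmx0 mxE. Qed.

Definition bform_linE := (bformDl, bformDr, bformNl, bformNr, bformZl, bformZr).

Lemma bformDm X Y x z : bform x (X + Y) z = bform x X z + bform x Y z.
Proof. by rewrite /bform mulmxDr mulmxDl mxE. Qed.

Lemma bformZm a X x z : bform x (a *: X) z = a * bform x X z.
Proof. by rewrite /bform -scalemxAr -scalemxAl mxE. Qed.

Lemma bform_summ (I : finType) (F : I -> 'M[R]_n) x z :
  bform x (\sum_i F i) z = \sum_i bform x (F i) z.
Proof.
apply: (big_morph (fun X => bform x X z)) => [X Y|]; first exact: bformDm.
by rewrite /bform mulmx0 mul0mx mxE.
Qed.

Lemma bform_mulmx m (A : 'M[R]_(n, m)) X (C : 'M[R]_(n, m)) (x z : 'cV[R]_m) :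
  bform x (A^T *m X *m C) z = bform (A *m x) X (C *m z).
Proof. by rewrite /bform trmx_mul !mulmxA. Qed.

Lemma bform_trmx X x z : bform x X^T z = bform z X x.
Proof.
have e : (x^T *m X^T *m z)^T = z^T *m X *m x by rewrite !trmx_mul !trmxK mulmxA.
by rewrite /bform -e !mxE.
Qed.

Lemma bform_sym X x z : X^T = X -> bform x X z = bform z X x.
Proof. by move=> sX; rewrite -bform_trmx sX. Qed.

Lemma bform_entries X y z : bform y X z = \sum_a \sum_b y a 0 * X a b * z b 0.
Proof.
rewrite exchange_big /bform mxE; apply: eq_bigr => b _.
by rewrite mxE mulr_suml; apply: eq_bigr => a _; rewrite !mxE.
Qed.

Lemma bform_delta X a b : bform (delta_mx a 0) X (delta_mx b 0) = X a b.
Proof. by rewrite /bform trmx_delta -rowE -colE !mxE. Qed.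

End BilinearForm.

Section TraceBounds.
Variables (R : realDomainType) (n : nat).
Implicit Types (X : 'M[R]_n) (y z : 'cV[R]_n).

Lemma mxtrace_outer y : \tr (y *m y^T) = \sum_a y a 0 ^+ 2.
Proof. by apply: eq_bigr => a _; rewrite mxE big_ord1 mxE expr2. Qed.

Lemma mxtrace_outer_ge0 y : 0 <= \tr (y *m y^T).
Proof. by rewrite mxtrace_outer sumr_ge0 // => a _; exact: sqr_ge0. Qed.

Lemma sqr_entry_le_tr y a : y a 0 ^+ 2 <= \tr (y *m y^T).
Proof. by rewrite mxtrace_outer (bigD1 a) //= lerDl sumr_ge0 // => b _; exact: sqr_ge0. Qed.

Lemma norm_entryM_le_tr y z a b : `|y a 0 * z b 0| <= \tr (y *m y^T) + \tr (z *m z^T).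
Proof.
apply: le_trans (lerD (sqr_entry_le_tr y a) (sqr_entry_le_tr z b)).
rewrite normrM -[y a 0 ^+ 2]real_normK ?num_real // -[z b 0 ^+ 2]real_normK ?num_real //.
by have := normr_ge0 (y a 0); have := normr_ge0 (z b 0); nra.
Qed.

Lemma bform_norm_le X y z :
  `|bform y X z| <= (\sum_a \sum_b `|X a b|) * (\tr (y *m y^T) + \tr (z *m z^T)).
Proof.
rewrite bform_entries mulr_suml (le_trans (ler_norm_sum _ _ _)) // ler_sum // => a _.
rewrite mulr_suml (le_trans (ler_norm_sum _ _ _)) // ler_sum // => b _.
by rewrite (mulrC (y a 0)) -mulrA normrM ler_wpM2l // norm_entryM_le_tr.
Qed.

End TraceBounds.

Section PositiveDefinite.
Variables (R : realType) (n : nat).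
Implicit Types (X : 'M[R]_n) (x y w : 'cV[R]_n).

Lemma posdef_gt0 X x : posdef X -> x != 0 -> 0 < bform x X x.
Proof. by case=> _; apply. Qed.

Lemma posdef_ge0 X x : posdef X -> 0 <= bform x X x.
Proof.
move=> hX; have [->|/(posdef_gt0 hX)/ltW //] := eqVneq x 0.
by rewrite bform0l.
Qed.

Lemma posdef_unitmx X : posdef X -> X \in unitmx.
Proof.
move=> hX; rewrite unitmxE unitfE; apply/negP => /det0P [v v0 vX].
have vT0 : v^T != 0 by rewrite -(inj_eq (@trmx_inj _ _ _)) trmxK trmx0.
by have := posdef_gt0 hX vT0; rewrite /bform trmxK vX mul0mx mxE ltxx.
Qed.

Lemma posdef_CauchySchwarz X w y : posdef X ->
  bform w X y ^+ 2 <= bform w X w * bform y X y.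
Proof.
move=> hX; have [->|y0] := eqVneq y 0.
  by rewrite !bform0r expr0n mulr0.
have qy0 := posdef_gt0 hX y0.
have := posdef_ge0 (bform y X y *: w - bform w X y *: y) hX.
rewrite !bform_linE (bform_sym y) ?(proj1 hX) //.
set qy := bform y X y; set qw := bform w X w; set b := bform w X y => h.
have : 0 <= qy * (qw * qy - b ^+ 2) by nra.
by rewrite pmulr_rge0 // subr_ge0 mulrC.
Qed.

Lemma posdef_coercive (I : finType) (X : I -> 'M[R]_n) : (forall i, posdef (X i)) ->
  exists C, forall i y, \tr (y *m y^T) <= C * bform y (X i) y.
Proof.
move=> hX; pose e i a : 'cV[R]_n := (invmx (X i))^T *m delta_mx a 0.
exists (\sum_i \sum_a bform (e i a) (X i) (e i a)) => i y.
have entryE a : y a 0 = bform (e i a) (X i) y.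
  rewrite /bform /e trmx_mul trmxK -(mulmxA _ (invmx _)) mulVmx ?posdef_unitmx //.
  by rewrite mulmx1 trmx_delta -rowE !mxE.
rewrite mxtrace_outer.
have qe0 j a : 0 <= bform (e j a) (X j) (e j a) by exact: posdef_ge0.
apply: le_trans (_ : (\sum_a bform (e i a) (X i) (e i a)) * bform y (X i) y <= _).
  rewrite mulr_suml ler_sum // => a _; rewrite entryE; exact: posdef_CauchySchwarz.
rewrite ler_wpM2r ?posdef_ge0 // (bigD1 i) //= lerDl.
by apply: sumr_ge0 => j _; apply: sumr_ge0.
Qed.

End PositiveDefinite.

Lemma posdef_add_congr (R : realType) n k (Rm : 'M[R]_k) (E : 'M[R]_n) (B : 'M[R]_(n, k)) :
  posdef Rm -> E^T = E -> (forall x, 0 <= bform x E x) ->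
  posdef (Rm + B^T *m E *m B).
Proof.
move=> hR sE hE; split.
  by rewrite linearD /= !trmx_mul trmxK sE (proj1 hR) mulmxA.
move=> x x0; rewrite -/(bform x _ x) bformDm bform_mulmx.
by have := hE (B *m x); have := posdef_gt0 hR x0; lra.
Qed.

Section Convergence.
Variable R : realType.
Implicit Types (u f g : R ^nat).

Lemma cvg_sum0 (I : Type) (r : seq I) (F : I -> R ^nat) :
  (forall i, F i @ \oo --> 0) -> (fun t => \sum_(i <- r) F i t) @ \oo --> 0.
Proof.
move=> F0; rewrite -[X in _ --> X](big1 (op := +%R) r predT (fun=> 0 : R)) //.
by apply: cvg_big => //; exact: add_continuous.
Qed.

Lemma cvg0_norm_le f g : (forall t, `|f t| <= g t) -> g @ \oo --> 0 -> f @ \oo --> 0.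
Proof.
move=> fg g0; apply: norm_cvg0; apply: (squeeze_cvgr _ (cvg_cst 0) g0).
by near=> t; rewrite normr_ge0 fg.
Unshelve. all: by end_near.
Qed.

Lemma bounded_series_cvg0 u C : (forall t, 0 <= u t) ->
  (forall n, \sum_(t < n) u t <= C) -> u @ \oo --> 0.
Proof.
move=> u0 uC; apply: cvg_series_cvg_0; apply: nondecreasing_is_cvgn.
  by rewrite seriesEnat; exact: nondecreasing_series.
by exists C => _ [n _ <-]; rewrite seriesEord; exact: (uC n).
Qed.

End Convergence.

Lemma big_tuple_cons (T : finType) (V : nmodType) n (F : seq T -> V) :
  \sum_(w : n.+1.-tuple T) F w = \sum_(i : T) \sum_(w : n.-tuple T) F (i :: w).
Proof.
rewrite pair_big /= (reindex (fun q : T * n.-tuple T => [tuple of q.1 :: q.2])) /=.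
  by apply: eq_bigr => -[i w].
exists (fun w : n.+1.-tuple T => (thead w, [tuple of behead w])).
  by move=> [i w] _ /=; congr (_, _); apply: val_inj.
by move=> w _; apply: val_inj => /=; case: w => -[|a s].
Qed.

Section MeanSquareStability.
Variables (R : realType) (N d : nat) (p : 'M[R]_N) (M : 'I_N -> 'M[R]_d).

Definition ms_stable : Prop :=
  forall (pi : 'I_N -> R) (x0 : 'cV[R]_d), prob_vector pi ->
    forall a b : 'I_d, (fun t : nat => second_moment pi p M x0 t a b) @ \oo --> (0 : R).

(* [cond_moment t i y] is E[x_t x_t^T] given omega(0) = i and x_0 = y. *)
Fixpoint cond_moment (t : nat) (i : 'I_N) (y : 'cV[R]_d) : 'M[R]_d :=
  if t is t'.+1 then \sum_j p i j *: cond_moment t' j (M i *m y) else y *m y^T.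

Lemma chainprobE i s : chainprob p i s = pathprob (p i) p s.
Proof. by case: s. Qed.

Lemma second_momentS pi x0 t :
  second_moment pi p M x0 t.+1 = \sum_i pi i *: second_moment (p i) p M (M i *m x0) t.
Proof.
pose F (w : seq 'I_N) := pathprob pi p w *: (traj M w x0 *m (traj M w x0)^T).
rewrite /second_moment (big_tuple_cons _ F); apply: eq_bigr => i _.
by rewrite scaler_sumr; apply: eq_bigr => w _; rewrite /F /= scalerA chainprobE.
Qed.

Hypothesis hp : stochastic p.

Lemma second_moment_cond pi x0 t : prob_vector pi ->
  second_moment pi p M x0 t = \sum_i pi i *: cond_moment t i x0.
Proof.
elim: t pi x0 => [|t IH] pi x0 [_ pi1].
  rewrite -scaler_suml pi1 scale1r /second_moment (big_pred1 [tuple]) ?scale1r //.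
  by move=> w; rewrite [w]tuple0; apply/eqP.
rewrite second_momentS; apply: eq_bigr => i _ /=.
by rewrite IH ?scaler_sumr //; case: hp => p0 p1; split.
Qed.

Lemma ms_stable_tr_cond_moment : ms_stable ->
  forall i y, (fun t => \tr (cond_moment t i y)) @ \oo --> 0.
Proof.
move=> hM i y; pose pi j : R := (j == i)%:R.
have hpi : prob_vector pi.
  split=> [j|]; first by rewrite /pi; case: (j == i).
  by rewrite (bigD1 i) //= big1 => [|j /negbTE ji]; rewrite /pi ?ji ?eqxx ?addr0.
have piE t : second_moment pi p M y t = cond_moment t i y.
  rewrite second_moment_cond // (bigD1 i) //= big1 => [|j /negbTE ji].
    by rewrite /pi eqxx scale1r addr0.
  by rewrite /pi ji scale0r.
by apply: cvg_sum0 => a; under eq_fun do rewrite -piE; exact: hM.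
Qed.

End MeanSquareStability.

Section LyapunovOperator.
Variables (R : realType) (N d : nat) (p : 'M[R]_N) (M : 'I_N -> 'M[R]_d).
Implicit Types (V W S Q : 'I_N -> 'M[R]_d) (x y z : 'cV[R]_d).

Definition lyap V i : 'M[R]_d := (M i)^T *m Eop p V i *m M i.

Lemma bform_lyap V i y z :
  bform y (lyap V i) z = \sum_j p i j * bform (M i *m y) (V j) (M i *m z).
Proof. by rewrite bform_mulmx bform_summ; apply: eq_bigr => j _; rewrite bformZm. Qed.

Lemma trmx_Eop V i : (Eop p V i)^T = Eop p (fun j => (V j)^T) i.
Proof. by rewrite /Eop linear_sum; apply: eq_bigr => j _; rewrite linearZ. Qed.

Lemma trmx_lyap V i : (lyap V i)^T = lyap (fun j => (V j)^T) i.
Proof. by rewrite /lyap !trmx_mul trmxK mulmxA trmx_Eop. Qed.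

Lemma lyapB V W i : lyap (fun j => V j - W j) i = lyap V i - lyap W i.
Proof.
rewrite /lyap -mulmxBl -mulmxBr /Eop -sumrB.
by congr (_ *m _ *m _); apply: eq_bigr => j _; rewrite scalerBr.
Qed.

Hypothesis hp : stochastic p.
Let p_ge0 i j : 0 <= p i j := proj1 hp i j.

Lemma iter_lyap_ge0 V : (forall j x, 0 <= bform x (V j) x) ->
  forall t i x, 0 <= bform x (iter t lyap V i) x.
Proof.
move=> V0; elim=> [|t IH] i x //=.
by rewrite bform_lyap sumr_ge0 // => j _; rewrite mulr_ge0.
Qed.

Lemma iter_lyap_bound V c :
  (forall i y z, `|bform y (V i) z| <= c * (\tr (y *m y^T) + \tr (z *m z^T))) ->
  forall t i y z, `|bform y (iter t lyap V i) z|
    <= c * (\tr (cond_moment p M t i y) + \tr (cond_moment p M t i z)).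
Proof.
move=> hV; elim=> [|t IH] i y z //=.
rewrite bform_lyap !raddf_sum -big_split mulr_sumr /=.
rewrite (le_trans (ler_norm_sum _ _ _)) // ler_sum // => j _.
by rewrite normrM ger0_norm // !mxtraceZ -mulrDr mulrCA ler_wpM2l.
Qed.

Lemma cond_moment_bound Q C :
  (forall i y a b, `|y a 0 * y b 0| <= C * bform y (Q i) y) ->
  forall t i y a b, `|cond_moment p M t i y a b| <= C * bform y (iter t lyap Q i) y.
Proof.
move=> hQ; elim=> [|t IH] i y a b /=; first by rewrite mxE big_ord1 mxE.
rewrite summxE bform_lyap mulr_sumr (le_trans (ler_norm_sum _ _ _)) // ler_sum // => j _.
by rewrite mxE normrM ger0_norm // mulrCA ler_wpM2l.
Qed.

Lemma lyap_partial_sum_le S V :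
  (forall i x, bform x (S i) x + bform x (lyap V i) x <= bform x (V i) x) ->
  forall n i x, \sum_(t < n) bform x (iter t lyap S i) x + bform x (iter n lyap V i) x
    <= bform x (V i) x.
Proof.
move=> hSV; elim=> [|n IH] i x; first by rewrite big_ord0 add0r.
apply: le_trans (hSV i x); rewrite big_ord_recl -addrA lerD2l /=.
under eq_bigr do rewrite bform_lyap.
rewrite exchange_big !bform_lyap -big_split /= ler_sum // => j _.
by rewrite -mulr_sumr -mulrDr ler_wpM2l.
Qed.

Lemma lyapunov_ms_stable Q V : (forall i, posdef (Q i)) ->
  (forall i x, 0 <= bform x (V i) x) ->
  (forall i x, bform x (Q i) x + bform x (lyap V i) x <= bform x (V i) x) ->
  ms_stable p M.
Proof.
move=> hQ V0 hQV pi x0 hpi a b.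
have [C hC] := posdef_coercive hQ.
have hQC i y a' b' : `|y a' 0 * y b' 0| <= 2 * C * bform y (Q i) y.
  apply: le_trans (norm_entryM_le_tr y y a' b') _.
  by rewrite -mulrA mulr_natl mulr2n lerD.
have iterQ_cvg0 i : (fun t => bform x0 (iter t lyap Q i) x0) @ \oo --> 0.
  apply: (@bounded_series_cvg0 _ _ (bform x0 (V i) x0)) => [t|n].
    by apply: iter_lyap_ge0 => j y; exact: posdef_ge0.
  have := lyap_partial_sum_le hQV n i x0; have := iter_lyap_ge0 V0 n i x0; lra.
apply: (@cvg0_norm_le _ _ (fun t => \sum_i pi i * (2 * C * bform x0 (iter t lyap Q i) x0))).
  move=> t; rewrite second_moment_cond // summxE (le_trans (ler_norm_sum _ _ _)) //.
  apply: ler_sum => i _; have pi0 := proj1 hpi i.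
  by rewrite mxE normrM ger0_norm // ler_wpM2l // cond_moment_bound.
apply: cvg_sum0 => i; rewrite -(mulr0 (pi i)) -(mulr0 (2 * C)).
by do 2!apply: cvgMl_tmp; exact: iterQ_cvg0.
Qed.

Hypothesis hM : ms_stable p M.

Lemma ms_stable_iter_lyap_cvg0 V i y z :
  (fun t => bform y (iter t lyap V i) z) @ \oo --> 0.
Proof.
pose c := \sum_j \sum_a \sum_b `|V j a b|.
have hV j y' z' : `|bform y' (V j) z'| <= c * (\tr (y' *m y'^T) + \tr (z' *m z'^T)).
  apply: le_trans (bform_norm_le _ _ _) _.
  rewrite ler_wpM2r ?addr_ge0 ?mxtrace_outer_ge0 // /c (bigD1 j) //= lerDl.
  by do 3!(apply: sumr_ge0 => ? _).
apply: cvg0_norm_le (fun t => iter_lyap_bound hV t i y z) _.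
rewrite -(mulr0 c) -(addr0 0); apply: cvgMl_tmp.
by apply: cvgD; exact: ms_stable_tr_cond_moment.
Qed.

Lemma lyap_eq_unique S V W :
  (forall i, V i = S i + lyap V i) -> (forall i, W i = S i + lyap W i) ->
  forall i, V i = W i.
Proof.
move=> hV hW i; pose D j := V j - W j.
have lyapD : lyap D = D.
  apply/funext => j; rewrite lyapB /D [in RHS]hV [in RHS]hW.
  by rewrite opprD addrACA subrr add0r.
have iterD t : iter t lyap D = D by elim: t => //= t ->.
apply/eqP; rewrite -subr_eq0; apply/eqP/matrixP => a b; rewrite [RHS]mxE -bform_delta.
have := ms_stable_iter_lyap_cvg0 D i (delta_mx a 0) (delta_mx b 0).
by under eq_fun do rewrite iterD; move/(cvg_lim (@Rhausdorff R)); rewrite lim_cst.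
Qed.

Lemma lyap_eq_ge S V : (forall j x, 0 <= bform x (S j) x) ->
  (forall i, V i = S i + lyap V i) -> forall i x, bform x (S i) x <= bform x (V i) x.
Proof.
move=> S0 hV i x.
have hSV j y : bform y (S j) y + bform y (lyap V j) y <= bform y (V j) y.
  by rewrite [in leRHS]hV bformDm.
have bound t : bform x (S i) x + bform x (iter t.+1 lyap V i) x <= bform x (V i) x.
  apply: le_trans (lyap_partial_sum_le hSV t.+1 i x).
  rewrite big_ord_recl -addrA lerD2l lerDr sumr_ge0 // => s _.
  exact: iter_lyap_ge0.
have lim_bound : (fun t => bform x (S i) x + bform x (iter t.+1 lyap V i) x) @ \oo
    --> bform x (S i) x.
  rewrite -[X in _ --> X]addr0; apply: cvgD; first exact: cvg_cst.
  by rewrite (cvg_shiftS (fun t => bform x (iter t lyap V i) x)); exact: ms_stable_iter_lyap_cvg0.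
by apply: (ler_cvg_to lim_bound (cvg_cst _)); apply: nearW.
Qed.

End LyapunovOperator.

Section QuadraticCost.
Variables (R : comPzRingType) (k d : nat).
Variables (Rm : 'M[R]_k) (E : 'M[R]_d) (B : 'M[R]_(d, k)) (a : 'cV[R]_d).

Definition lq_cost (u : 'cV[R]_k) : R := bform u Rm u + bform (a - B *m u) E (a - B *m u).

Lemma lq_cost_step u delta c : Rm^T = Rm -> E^T = E ->
  (Rm + B^T *m E *m B) *m delta = (Rm + B^T *m E *m B) *m u - B^T *m (E *m a) ->
  lq_cost (u - c *: delta)
    = lq_cost u - c * (2 - c) * bform delta (Rm + B^T *m E *m B) delta.
Proof.
move=> sR sE hdelta; set G := Rm + _ in hdelta *; set e := B *m delta.
have ev : a - B *m (u - c *: delta) = a - B *m u + c *: e.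
  by rewrite mulmxBr scalemxAr opprB addrA addrAC.
have qG : bform delta G delta = bform delta Rm delta + bform e E e.
  by rewrite bformDm bform_mulmx.
have cross : bform delta Rm u = bform delta G delta + bform e E a - bform e E (B *m u).
  have -> : bform delta G delta = (delta^T *m (G *m delta)) 0 0 by rewrite /bform mulmxA.
  have entryB (X Y : 'M[R]_1) : (X - Y) 0 0 = X 0 0 - Y 0 0 by rewrite !mxE.
  rewrite hdelta mulmxBr !mulmxA -trmx_mul -/e entryB.
  by rewrite -/(bform delta G u) -/(bform e E a) /G bformDm bform_mulmx; ring.
rewrite /lq_cost ev !bform_linE (bform_sym u) // (bform_sym a e) // (bform_sym (B *m u) e) //.
by rewrite cross qG; ring.
Qed.

End QuadraticCost.

Section GainUpdate.
Variables (R : realType) (N d k : nat) (p : 'M[R]_N).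
Variables (A : 'I_N -> 'M[R]_d) (B : 'I_N -> 'M[R]_(d, k)) (Q : 'I_N -> 'M[R]_d).
Variables (Rc : 'I_N -> 'M[R]_k) (K : 'I_N -> 'M[R]_(k, d)) (P : 'I_N -> 'M[R]_d).
Hypotheses (hp : stochastic p) (hQ : forall i, posdef (Q i)) (hR : forall i, posdef (Rc i)).
Hypotheses (hK : ms_stabilizing p A B K) (hPK : is_PK p A B Q Rc K P).

Let M := closed_loop A B K.
Let hM : ms_stable p M := hK.
Let S i := Q i + (K i)^T *m Rc i *m K i.

Lemma PK_sym i : (P i)^T = P i.
Proof.
have sS j : (S j)^T = S j.
  by rewrite linearD /= !trmx_mul trmxK (proj1 (hQ j)) (proj1 (hR j)) mulmxA.
have hPt j : (P j)^T = S j + lyap p M (fun l => (P l)^T) j.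
  by rewrite [in LHS]hPK linearD /= sS trmx_lyap.
exact: esym (lyap_eq_unique hp hM hPK hPt i).
Qed.

Lemma PK_ge0 i x : 0 <= bform x (P i) x.
Proof.
have S0 j y : 0 <= bform y (S j) y.
  by rewrite bformDm bform_mulmx addr_ge0 ?posdef_ge0.
exact: le_trans (S0 i x) (lyap_eq_ge hp hM S0 hPK i x).
Qed.

Lemma Kupdate_lyap_le eta i x : 0 <= eta <= 1 ->
  bform x (Q i) x + bform x (lyap p (closed_loop A B (Kupdate eta p A B Rc K P)) P i) x
    <= bform x (P i) x.
Proof.
move=> /andP[eta_ge0 eta_le1]; set E := Eop p P i; set G := Rc i + (B i)^T *m E *m B i.
have sE : E^T = E by rewrite trmx_Eop; congr Eop; apply/funext => j; exact: PK_sym.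
have E0 v : 0 <= bform v E v.
  rewrite bform_summ sumr_ge0 // => j _.
  by rewrite bformZm mulr_ge0 ?PK_ge0 ?(proj1 hp).
have hG : posdef G := posdef_add_congr (B i) (hR i) sE E0.
set delta := invmx G *m (LK p A B Rc K P i *m x).
have hdelta : G *m delta = G *m (K i *m x) - (B i)^T *m (E *m (A i *m x)).
  by rewrite /delta [LHS]mulmxA mulmxV ?posdef_unitmx // mul1mx /LK mulmxBl -/E -/G -!mulmxA.
have Kx : Kupdate eta p A B Rc K P i *m x = K i *m x - (2 * eta) *: delta.
  by rewrite /Kupdate mulmxBl -scalemxAl -/E -/G -mulmxA.
have costP : bform x (P i) x = bform x (Q i) x + lq_cost (Rc i) E (B i) (A i *m x) (K i *m x).
  by rewrite [in LHS]hPK !bformDm !bform_mulmx /closed_loop mulmxBl -mulmxA addrA.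
rewrite costP bform_mulmx -/E /closed_loop mulmxBl -mulmxA Kx.
have := lq_cost_step (2 * eta) (proj1 (hR i)) sE hdelta; rewrite /lq_cost -/G => step.
have decrease : 0 <= 2 * eta * (2 - 2 * eta) * bform delta G delta.
  by rewrite !mulr_ge0 ?(posdef_ge0 _ hG) //; lra.
have := posdef_ge0 (K i *m x - (2 * eta) *: delta) (hR i).
lra.
Qed.

End GainUpdate.

Theorem lemma6 (R : realType) (N d k : nat) (hN : (0 < N)%N)
  (p : 'M[R]_N) (A : 'I_N -> 'M[R]_d) (B : 'I_N -> 'M[R]_(d, k))
  (Q : 'I_N -> 'M[R]_d) (Rc : 'I_N -> 'M[R]_k)
  (K : 'I_N -> 'M[R]_(k, d)) (P : 'I_N -> 'M[R]_d) (eta : R) :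
  stochastic p ->
  (forall i, posdef (Q i)) -> (forall i, posdef (Rc i)) ->
  ms_stabilizing p A B K ->
  is_PK p A B Q Rc K P ->
  0 < eta -> eta <= 1 / 2 ->
  ms_stabilizing p A B (Kupdate eta p A B Rc K P).
Proof.
move=> hp hQ hR hK hPK eta_gt0 eta_le.
apply: (lyapunov_ms_stable hp hQ (V := P)); first exact: (PK_ge0 hp hQ hR hK hPK).
move=> i x; apply: (Kupdate_lyap_le hp hQ hR hK hPK).
by apply/andP; split; lra.
Qed.
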